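(* Every permutation class containing only finitely many simple permutations is finitely based, i.e. its basis is finite.
   Context: A permutation $\pi$ contains $\sigma$ ($\sigma\le\pi$) if some subsequence of $\pi$ has the same relative order as $\sigma$. A permutation class is a downset under $\le$; its basis is the set of $\le$-minimal permutations not in the class. An interval of a permutation is a set of contiguous positions whose values form a contiguous set; a permutation of length $n$ is simple if its only intervals have sizes $0,1,n$. *)

(* Permutations of length n are represented as sequences
   of naturals that are rearrangements of [:: 0; 1; ...; n-1]. *)
From mathcomp Require Import all_boot.
Set Implicit Arguments. Unset Strict Implicit. Unset Printing Implicit Defensive.

Definition is_perm (s : seq nat) : Prop := perm_eq s (iota 0 (size s)).

Definition order_iso (t sigma : seq nat) : Prop :=
  size t = size sigma /\
  forall i j, i < size t -> j < size t ->
    (nth 0 t i < nth 0 t j) = (nth 0 sigma i < nth 0 sigma j).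

Definition contains (pi sigma : seq nat) : Prop :=
  exists t, subseq t pi /\ order_iso t sigma.

Definition perm_class (C : seq nat -> Prop) : Prop :=
  (forall p, C p -> is_perm p) /\
  (forall p q, C p -> is_perm q -> contains p q -> C q).

Definition in_basis (C : seq nat -> Prop) (b : seq nat) : Prop :=
  is_perm b /\ ~ C b /\
  (forall q, is_perm q -> contains b q -> q <> b -> C q).

Definition is_interval (s : seq nat) (i j : nat) : Prop :=
  i <= j <= size s /\
  exists a, perm_eq (drop i (take j s)) (iota a (j - i)).

Definition simple (s : seq nat) : Prop :=
  forall i j, is_interval s i j ->
    j - i = 0 \/ j - i = 1 \/ j - i = size s.

Definition finite_set (P : seq nat -> Prop) : Prop :=
  exists L : seq (seq nat), forall p, P p -> p \in L.

(* A basis element b = v :: s of C is a "pointed" permutation: its tail s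
   standardises to an element of C.  We prove that pointed sequences whose
   tail lies in C are well-quasi-ordered by embeddings that fix the point;
   since the basis is an antichain, it must then be finite. *)
From mathcomp Require Import all_boot zify.
From Stdlib Require Import Classical IndefiniteDescription.
Set Implicit Arguments. Unset Strict Implicit. Unset Printing Implicit Defensive.

Definition order_compatible (Z : seq (nat * nat)) : Prop :=
  forall p q, p \in Z -> q \in Z -> (p.1 < q.1) = (p.2 < q.2).

Lemma mem_zipP (a b : seq nat) p : size a = size b -> p \in zip a b ->
  exists2 i, i < size a & p = (nth 0 a i, nth 0 b i).
Proof.
move=> Hs Hp; exists (index p (zip a b)).
  by move: Hp; rewrite -index_mem size_zip Hs minnn.
by rewrite -nth_zip // nth_index.
Qed.

Lemma mem_zip_nth (a b : seq nat) i : size a = size b -> i < size a ->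
  (nth 0 a i, nth 0 b i) \in zip a b.
Proof.
by move=> Hs Hi; rewrite -nth_zip //; apply: mem_nth; rewrite size_zip Hs minnn -Hs.
Qed.

Lemma mem_zip_fst_snd (a b : seq nat) p : p \in zip a b -> p.1 \in a /\ p.2 \in b.
Proof.
elim: a b => [|x a IH] [|y b] //=; rewrite in_cons => /orP [/eqP->|Hp].
  by rewrite !mem_head.
by have [H1 H2] := IH _ Hp; rewrite !in_cons H1 H2 !orbT.
Qed.

Lemma zip_mask (m : bitseq) (a b : seq nat) : size a = size b ->
  zip (mask m a) (mask m b) = mask m (zip a b).
Proof.
elim: m a b => [|c m IH] [|x a] [|y b] //= [Hs].
by case: c; rewrite /= IH.
Qed.

Lemma order_compatible_mask m Z : order_compatible Z -> order_compatible (mask m Z).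
Proof. by move=> H p q Hp Hq; apply: H; apply: (mem_subseq (mask_subseq m Z)). Qed.

Lemma order_compatible_refl a : order_compatible (zip a a).
Proof.
move=> p q Hp Hq.
by have [i _ ->] := mem_zipP (erefl _) Hp; have [j _ ->] := mem_zipP (erefl _) Hq.
Qed.

Lemma order_compatible_trans (a b c : seq nat) : size a = size b -> size b = size c ->
  order_compatible (zip a b) -> order_compatible (zip b c) -> order_compatible (zip a c).
Proof.
move=> Hab Hbc H1 H2 p q Hp Hq.
have Hac : size a = size c by rewrite Hab.
have [i Hi ->] := mem_zipP Hac Hp; have [j Hj ->] := mem_zipP Hac Hq.
have := H1 _ _ (mem_zip_nth Hab Hi) (mem_zip_nth Hab Hj).
rewrite Hab in Hi Hj.
by have := H2 _ _ (mem_zip_nth Hbc Hi) (mem_zip_nth Hbc Hj) => /= -> ->.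
Qed.

Definition occurs (pi sigma : seq nat) : Prop :=
  exists t, subseq t pi /\ size t = size sigma /\ order_compatible (zip t sigma).

Lemma containsE pi sigma : contains pi sigma <-> occurs pi sigma.
Proof.
split.
  move=> [t [Hsub [Hs Hiso]]]; exists t; split=> //; split=> // p q Hp Hq.
  have [i Hi ->] := mem_zipP Hs Hp; have [j Hj ->] := mem_zipP Hs Hq.
  by rewrite /= Hiso.
move=> [t [Hsub [Hs Hm]]]; exists t; split=> //; split=> // i j Hi Hj.
exact: Hm _ _ (mem_zip_nth Hs Hi) (mem_zip_nth Hs Hj).
Qed.

Lemma occurs_trans s3 s2 s1 : occurs s3 s2 -> occurs s2 s1 -> occurs s3 s1.
Proof.
move=> [t2 [H2 [S2 M2]]] [t1 [H1 [S1 M1]]].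
case/subseqP: H1 => m Hm Et1.
exists (mask m t2); split; first exact: subseq_trans (mask_subseq _ _) H2.
have Sm : size (mask m t2) = size t1 by rewrite Et1 !size_mask // S2.
split; first by rewrite Sm.
apply: (@order_compatible_trans _ (mask m s2)) => //.
- by rewrite Sm Et1.
- by rewrite -Et1.
- by rewrite zip_mask //; apply: order_compatible_mask.
- by rewrite -Et1.
Qed.

Lemma occurs_subseq s t : subseq t s -> occurs s t.
Proof. by move=> H; exists t; split=> //; split=> //; apply: order_compatible_refl. Qed.

Definition rank (s : seq nat) (x : nat) := count (fun y => y < x) s.
(* [std s] is the permutation order-isomorphic to the duplicate-free s. *)
Definition std (s : seq nat) := map (rank s) s.

Lemma rank_lt_strict s x y : x < y -> x \in s -> rank s x < rank s y.
Proof.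
rewrite /rank => Hxy; elim: s => //= z s IH; rewrite in_cons => /orP [/eqP Ez | H].
  rewrite -Ez ltnn Hxy /= add0n add1n ltnS.
  by apply: sub_count => w /= H; apply: ltn_trans H Hxy.
have := IH H; case Hz: (z < x); first by rewrite (ltn_trans Hz Hxy).
by case: (z < y) => //= Hl; apply: ltn_trans Hl _.
Qed.

Lemma rank_lt s x y : x \in s -> (x < y) = (rank s x < rank s y).
Proof.
move=> Hx; case: (ltnP x y) => Hxy; first by rewrite rank_lt_strict.
by apply/esym/negbTE; rewrite -leqNgt; apply: sub_count => w /= H; apply: leq_trans H Hxy.
Qed.

Lemma rank_inj s : {in s &, injective (rank s)}.
Proof.
move=> x y Hx Hy E; case: (ltngtP x y) => // H.
  by move: (rank_lt_strict H Hx); rewrite E ltnn.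
by move: (rank_lt_strict H Hy); rewrite E ltnn.
Qed.

Lemma rank_small s x : x \in s -> rank s x < size s.
Proof.
move=> Hx; rewrite /rank -(count_predC (fun y => y < x) s) -{1}(addn0 (count _ s)).
by rewrite ltn_add2l -has_count; apply/hasP; exists x => //=; rewrite ltnn.
Qed.

Lemma size_std s : size (std s) = size s.
Proof. by rewrite size_map. Qed.

Lemma perm_of_uniq (p : seq nat) : uniq p -> all (fun x => x < size p) p -> is_perm p.
Proof.
move=> Hu /allP Ha; apply: uniq_perm => //; first exact: iota_uniq.
have Hsub : {subset p <= iota 0 (size p)} by move=> x Hx; rewrite mem_iota add0n Ha.
by have [] := uniq_min_size Hu Hsub; rewrite size_iota.
Qed.

Lemma is_perm_uniq p : is_perm p -> uniq p.
Proof. by move=> H; rewrite (perm_uniq H) iota_uniq. Qed.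

Lemma std_perm s : uniq s -> is_perm (std s).
Proof.
move=> Hu; apply: perm_of_uniq; first by rewrite map_inj_in_uniq //; apply: rank_inj.
by apply/allP => y /mapP [x Hx ->]; rewrite size_std; apply: rank_small.
Qed.

Lemma occurs_std s : occurs s (std s).
Proof.
exists s; split=> //; split; first by rewrite size_std.
rewrite /std -{1}(map_id s) zip_map => p q /mapP [x Hx ->] /mapP [y Hy ->] /=.
exact: rank_lt.
Qed.

Lemma std_occurs s : occurs (std s) s.
Proof.
exists (std s); split=> //; split; first by rewrite size_std.
rewrite /std -[X in zip _ X](map_id s) zip_map => p q /mapP [x Hx ->] /mapP [y Hy ->] /=.
by rewrite -rank_lt.
Qed.

Lemma std_eq_order_compatible a b : std a = std b -> order_compatible (zip b a).
Proof.
move=> E; have Hs : size b = size a by rewrite -(size_std a) E size_std.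
move=> p q Hp Hq; have [i Hi ->] := mem_zipP Hs Hp; have [j Hj ->] := mem_zipP Hs Hq.
have Hi' : i < size a by rewrite -Hs.
have Hj' : j < size a by rewrite -Hs.
rewrite /= (rank_lt _ (mem_nth 0 Hi)) (rank_lt _ (mem_nth 0 Hi')).
rewrite -(nth_map 0 0 (rank b) Hi) -(nth_map 0 0 (rank b) Hj).
by rewrite -(nth_map 0 0 (rank a) Hi') -(nth_map 0 0 (rank a) Hj') -/(std a) -/(std b) E.
Qed.

(* [good_on le P]: every infinite sequence of elements of P has a pair of
   indices i < j with [le (f i) (f j)]; for a transitive [le] this says that
   [le] well-quasi-orders P. *)
Definition good_on (X : Type) (le : X -> X -> Prop) (P : X -> Prop) :=
  forall f : nat -> X, (forall n, P (f n)) -> exists i j, i < j /\ le (f i) (f j).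

Lemma least_witness (Q : nat -> Prop) :
  (exists n, Q n) -> exists n, Q n /\ forall m, Q m -> n <= m.
Proof.
move=> [n Hn]; elim/ltn_ind: n Hn => n IH Hn.
case: (classic (exists m, Q m /\ m < n)) => [[m [Hm Hmn]]|H]; first exact: IH m Hmn Hm.
by exists n; split=> // m Hm; rewrite leqNgt; apply/negP => Hl; apply: H; exists m.
Qed.

Lemma dependent_choice (R : nat -> Prop) (S : nat -> nat -> Prop) n0 :
  (forall n, R n -> exists j, n < j /\ R j /\ S n j) -> R n0 ->
  exists phi : nat -> nat, phi 0 = n0 /\
    forall k, R (phi k) /\ phi k < phi k.+1 /\ S (phi k) (phi k.+1).
Proof.
move=> H H0.
have H' n : exists j, R n -> n < j /\ R j /\ S n j.
  by case: (classic (R n)) => [/H [j Hj]|Hn]; [exists j | exists 0].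
pose nxt n := proj1_sig (constructive_indefinite_description _ (H' n)).
have Hnxt n : R n -> n < nxt n /\ R (nxt n) /\ S n (nxt n).
  exact: (proj2_sig (constructive_indefinite_description _ (H' n))).
have HR k : R (iter k nxt n0) by elim: k => //= k IH; have [_ [? _]] := Hnxt _ IH.
exists (fun k => iter k nxt n0); split=> // k; split; first exact: HR.
by have [? [_ ?]] := Hnxt _ (HR k).
Qed.

Lemma increasing_lt (phi : nat -> nat) :
  (forall k, phi k < phi k.+1) -> {homo phi : a b / a < b}.
Proof. exact: homo_ltn ltn_trans. Qed.

Section GoodSequences.
Variables (X : Type) (le : X -> X -> Prop) (P : X -> Prop).
Hypothesis le_trans : forall a b c, le a b -> le b c -> le a c.
Hypothesis P_good : good_on le P.

Lemma eventually_below_later f : (forall n, P (f n)) ->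
  exists N, forall n, N <= n -> exists j, n < j /\ le (f n) (f j).
Proof.
move=> Hf; apply: NNPP => HN.
pose terminal n := forall j, n < j -> ~ le (f n) (f j).
have HT N : exists n, N <= n /\ terminal n.
  apply: NNPP => HnN; apply: HN; exists N => n Hn.
  apply: NNPP => Hj; apply: HnN; exists n; split=> // j Hnj Hle; apply: Hj; by exists j.
have [n0 [_ Hn0]] := HT 0.
have Hstep n : terminal n -> exists j, n < j /\ terminal j /\ True.
  by move=> _; have [j [Hj HR]] := HT n.+1; exists j.
have [phi [_ Hphi]] := dependent_choice Hstep Hn0.
have Hinc : {homo phi : a b / a < b}.
  by apply: increasing_lt => k; have [_ []] := Hphi k.
have [i [j [Hij Hle]]] := P_good (fun k => Hf (phi k)).
by have [Hi _] := Hphi i; apply: Hi (Hinc _ _ Hij) Hle.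
Qed.

Lemma ascending_subsequence f : (forall n, P (f n)) ->
  exists phi, (forall k, phi k < phi k.+1) /\ (forall k, le (f (phi k)) (f (phi k.+1))).
Proof.
move=> Hf; have [N HN] := eventually_below_later Hf.
have Hstep n : N <= n -> exists j, n < j /\ N <= j /\ le (f n) (f j).
  move=> Hn; have [j [Hj Hle]] := HN n Hn; exists j; split=> //; split=> //.
  exact: leq_trans Hn (ltnW Hj).
have [phi [_ Hphi]] := dependent_choice Hstep (leqnn N).
by exists phi; split=> k; have [_ []] := Hphi k.
Qed.

Lemma good_on_tuples (x0 : X) m (F : nat -> seq X) :
  (forall n, size (F n) = m /\ forall i, i < m -> P (nth x0 (F n) i)) ->
  exists a b, a < b /\ forall i, i < m -> le (nth x0 (F a) i) (nth x0 (F b) i).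
Proof.
elim: m F => [|m IH] F HF; first by exists 0, 1.
have HP0 n : P (nth x0 (F n) 0) by have [_ H] := HF n; apply: H.
have [phi [Hphi Hle]] := ascending_subsequence HP0.
have HG n : size (behead (F (phi n))) = m /\
    forall i, i < m -> P (nth x0 (behead (F (phi n))) i).
  have [Hs H] := HF (phi n); split; first by rewrite size_behead Hs.
  by move=> i Hi; rewrite nth_behead; apply: H.
have [a [b [Hab Hi]]] := IH _ HG.
exists (phi a), (phi b); split; first exact: increasing_lt Hphi _ _ Hab.
case=> [|i] Hi'; last by have := Hi i Hi'; rewrite !nth_behead.
exact: (homo_ltn (fun y x z => @le_trans x y z) Hle Hab).
Qed.

End GoodSequences.

Lemma pigeonhole_subsequence (L : eqType) (labs : seq L) (G : nat -> L) :
  (forall n, G n \in labs) ->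
  exists lam (psi : nat -> nat), (forall k, psi k < psi k.+1) /\ forall k, G (psi k) = lam.
Proof.
move=> HG.
have [lam Hlam] : exists lam, forall N, exists n, N <= n /\ G n = lam.
  apply: NNPP => H.
  have Hl lam : exists N, forall n, N <= n -> G n != lam.
    apply: NNPP => H1; apply: H; exists lam => N; apply: NNPP => H2; apply: H1.
    by exists N => n Hn; apply/eqP => E; apply: H2; exists n.
  have Hfin (l : seq L) : exists N, forall n, N <= n -> G n \notin l.
    elim: l => [|lam l [N2 IH]]; first by exists 0.
    have [N1 H1] := Hl lam; exists (maxn N1 N2) => n; rewrite geq_max => /andP [Hn1 Hn2].
    by rewrite in_cons negb_or H1 ?IH.
  by have [N HN] := Hfin labs; move: (HN N (leqnn N)); rewrite HG.
have [n0 [_ Hn0]] := Hlam 0.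
have Hstep n : G n = lam -> exists j, n < j /\ G j = lam /\ True.
  by move=> _; have [j [Hj Hj2]] := Hlam n.+1; exists j.
have [psi [_ Hpsi]] := dependent_choice Hstep Hn0.
by exists lam, psi; split=> k; have [? []] := Hpsi k.
Qed.

Section MinimalBadSequence.
Variables (X : eqType) (x0 : X) (le : X -> X -> Prop) (Obj : X -> Prop) (sz : X -> nat).

Definition bad_seq (f : nat -> X) : Prop :=
  (forall n, Obj (f n)) /\ forall i j, i < j -> ~ le (f i) (f j).

(* Nash-Williams' minimal bad sequence: among the bad sequences extending
   g 0, ..., g (n-1), the n-th term of g has the least size. *)
Definition minimal_bad (g : nat -> X) : Prop :=
  bad_seq g /\
  forall n f, bad_seq f -> (forall i, i < n -> f i = g i) -> sz (g n) <= sz (f n).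

Definition bad_prefix (l : seq X) : Prop :=
  exists f, bad_seq f /\ forall i, i < size l -> f i = nth x0 l i.

Lemma bad_prefix_rcons l f : bad_seq f -> (forall i, i < size l -> f i = nth x0 l i) ->
  bad_prefix (rcons l (f (size l))).
Proof.
move=> Hf Hfl; exists f; split=> // i.
rewrite size_rcons ltnS leq_eqVlt nth_rcons => /orP [/eqP->|Hi]; first by rewrite ltnn eqxx.
by rewrite Hi Hfl.
Qed.

Lemma bad_prefix_least_extension l : exists x, bad_prefix l ->
  bad_prefix (rcons l x) /\ forall y, bad_prefix (rcons l y) -> sz x <= sz y.
Proof.
case: (classic (bad_prefix l)) => [[f [Hf Hfl]]|Hl]; last by exists x0.
have Hex : exists n y, bad_prefix (rcons l y) /\ sz y = n.
  by exists (sz (f (size l))), (f (size l)); split=> //; apply: bad_prefix_rcons.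
have [n [[y [Hy <-]] Hmin]] := least_witness Hex.
by exists y => _; split=> // y' Hy'; apply: Hmin; exists y'.
Qed.

(* Iterating least extensions from the empty prefix yields a minimal bad
   sequence, provided some bad sequence exists. *)
Lemma minimal_bad_exists : ~ good_on le Obj -> exists g, minimal_bad g.
Proof.
move=> Hbad.
have Hnil : bad_prefix [::].
  apply: NNPP => H; apply: Hbad => f Hf; apply: NNPP => H2; apply: H.
  by exists f; split=> //; split=> // i j Hij Hle; apply: H2; exists i, j.
pose step l := proj1_sig (constructive_indefinite_description _ (bad_prefix_least_extension l)).
have Hst l : bad_prefix l -> bad_prefix (rcons l (step l)) /\
    forall y, bad_prefix (rcons l y) -> sz (step l) <= sz y.
  exact: (proj2_sig (constructive_indefinite_description _ (bad_prefix_least_extension l))).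
pose pre n := iter n (fun l => rcons l (step l)) [::].
pose g n := step (pre n).
have Hpre n : bad_prefix (pre n) by elim: n => //= n IH; have [] := Hst _ IH.
have Hsize n : size (pre n) = n by elim: n => //= n IH; rewrite size_rcons IH.
have Hnth n i : i < n -> nth x0 (pre n) i = g i.
  elim: n => // n IH; rewrite ltnS leq_eqVlt /= nth_rcons Hsize => /orP [/eqP->|Hi].
    by rewrite ltnn eqxx.
  by rewrite Hi IH.
have Hg n : exists f, bad_seq f /\ forall i, i <= n -> f i = g i.
  have [f [Hf Hfl]] := Hpre n.+1; exists f; split=> // i Hi.
  by rewrite Hfl ?Hsize // Hnth.
exists g; split.
  split=> [n|i j Hij].
  - by have [f [[Hf _] Hfg]] := Hg n; rewrite -Hfg.
  - have [f [[_ Hfbad] Hfg]] := Hg j.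
    by rewrite -Hfg ?(ltnW Hij) // -Hfg //; apply: Hfbad.
move=> n f Hf Hfg; apply: (proj2 (Hst _ (Hpre n))).
rewrite -[n in f n](Hsize n); apply: bad_prefix_rcons => // i.
by rewrite Hsize => Hi; rewrite Hnth ?Hfg.
Qed.

Hypothesis le_trans : forall a b c, le a b -> le b c -> le a c.

(* If every object decomposes into strictly smaller objects below it, the
   pieces of the terms of a minimal bad sequence form a good set: a bad
   sequence of pieces could be grafted onto g to undercut its minimality. *)
Lemma minimal_bad_pieces_good (pieces : X -> seq X) (g : nat -> X) :
  (forall x c : X, Obj x -> c \in pieces x -> Obj c /\ sz c < sz x /\ le c x) ->
  minimal_bad g -> good_on le (fun y => exists n, y \in pieces (g n)).
Proof.
move=> Hpc [[HgObj Hgbad] Hgmin] h Hh; apply: NNPP => Hno.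
have hbad i j : i < j -> ~ le (h i) (h j) by move=> Hij Hle; apply: Hno; exists i, j.
pose src i := proj1_sig (constructive_indefinite_description _ (Hh i)).
have Hsrc i : h i \in pieces (g (src i)).
  exact: (proj2_sig (constructive_indefinite_description _ (Hh i))).
have Hhi i : Obj (h i) /\ sz (h i) < sz (g (src i)) /\ le (h i) (g (src i)).
  exact: Hpc (HgObj _) (Hsrc i).
have [N [[i0 Hi0] HN]] :=
  @least_witness (fun m => exists i, src i = m) (ex_intro _ _ (ex_intro _ 0 erefl)).
pose f k := if k < N then g k else h (i0 + (k - N)).
have Hfbad : bad_seq f.
  split=> [k|i j Hij]; first by rewrite /f; case: (k < N) => //; case: (Hhi (i0 + (k - N))).
  rewrite /f; case: (ltnP i N) => HiN; case: (ltnP j N) => HjN.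
  - exact: Hgbad.
  - move=> Hle; have [_ [_ Hl2]] := Hhi (i0 + (j - N)).
    apply: (Hgbad i (src (i0 + (j - N)))); last exact: le_trans Hle Hl2.
    by apply: leq_trans HiN _; apply: HN; eexists.
  - by move: (leq_trans (ltn_trans Hij HjN) HiN); rewrite ltnn.
  - by apply: hbad; rewrite ltn_add2l -(ltn_add2r N) !subnK.
have Hfg i : i < N -> f i = g i by rewrite /f => ->.
have := Hgmin N f Hfbad Hfg; rewrite /f ltnn subnn addn0.
by have [_ [Hlt _]] := Hhi i0; rewrite Hi0 in Hlt; rewrite leqNgt Hlt.
Qed.

End MinimalBadSequence.

(* Higman--Kruskal-type theorem for finitely labelled decompositions. *)
Theorem labelled_decomposition_good (X : eqType) (x0 : X) (L : eqType)
  (le : X -> X -> Prop) (Obj : X -> Prop) (sz : X -> nat)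
  (lab : X -> L) (labs : seq L) (pieces : X -> seq X) :
  (forall a b c, le a b -> le b c -> le a c) ->
  (forall x, Obj x -> lab x \in labs) ->
  (forall x c, Obj x -> c \in pieces x -> Obj c /\ sz c < sz x /\ le c x) ->
  (forall x y, Obj x -> Obj y -> lab x = lab y -> size (pieces x) = size (pieces y)) ->
  (forall x y, Obj x -> Obj y -> lab x = lab y ->
     (forall i, i < size (pieces x) -> le (nth x0 (pieces x) i) (nth x0 (pieces y) i)) ->
     le x y) ->
  good_on le Obj.
Proof.
move=> Htr Hlab Hpc Hsz Hcomb; apply: NNPP => /(minimal_bad_exists x0 sz) [g Hgmin].
have Hpieces := minimal_bad_pieces_good Htr Hpc Hgmin.
have [[HgObj Hgbad] _] := Hgmin.
have [lam [psi [Hpsi Hlam]]] := pigeonhole_subsequence (fun n => Hlab _ (HgObj n)).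
pose m := size (pieces (g (psi 0))).
have HF n : size (pieces (g (psi n))) = m /\
    forall i, i < m -> exists k, nth x0 (pieces (g (psi n))) i \in pieces (g k).
  have Hs : size (pieces (g (psi n))) = m by apply: Hsz; rewrite ?Hlam.
  by split=> // i Hi; exists (psi n); apply: mem_nth; rewrite Hs.
have [a [b [Hab Hi]]] := good_on_tuples Htr Hpieces HF.
apply: (Hgbad (psi a) (psi b)); first exact: increasing_lt Hpsi _ _ Hab.
by apply: Hcomb; rewrite ?Hlam // (proj1 (HF a)).
Qed.

(* A block decomposition: a list of nonempty, pairwise disjoint blocks such
   that any two elements taken from two different blocks compare like the
   first elements (heads) of these blocks.  Its skeleton is the list of
   heads, so the flattening is obtained by inflating the skeleton. *)
Definition blockwise (bs : seq (seq nat)) : Prop :=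
  all (fun B => 0 < size B) bs /\ uniq (flatten bs) /\
  forall B B', B \in bs -> B' \in bs -> B != B' ->
    forall x y, x \in B -> y \in B' -> (x < y) = (head 0 B < head 0 B').

Definition skeleton (bs : seq (seq nat)) : seq nat := map (head 0) bs.

Lemma mem_flatten_block (bs : seq (seq nat)) B : B \in bs -> {subset B <= flatten bs}.
Proof. by move=> HB x Hx; apply/flattenP; exists B. Qed.

Lemma block_subseq (bs : seq (seq nat)) B : B \in bs -> subseq B (flatten bs).
Proof.
elim: bs => //= C bs IH; rewrite in_cons => /orP [/eqP-> | HB].
  by rewrite -{1}(cats0 C); apply: cat_subseq (subseq_refl _) (sub0seq _).
by rewrite -[B]cat0s; apply: cat_subseq (sub0seq _) (IH HB).
Qed.

Lemma skeleton_subseq (bs : seq (seq nat)) : all (fun B => 0 < size B) bs ->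
  subseq (skeleton bs) (flatten bs).
Proof.
rewrite /skeleton; elim: bs => [|[|x B] bs IH] //= Hall; rewrite eqxx.
by rewrite -[map _ _]cat0s; apply: cat_subseq (sub0seq _) (IH Hall).
Qed.

Lemma blocks_disjoint (bs : seq (seq nat)) B B' z : uniq (flatten bs) ->
  B \in bs -> B' \in bs -> B != B' -> z \in B -> z \notin B'.
Proof.
elim: bs => //= C bs IH; rewrite cat_uniq => /and3P [_ Hdis Hu].
rewrite !in_cons => /orP [/eqP EB | HB] /orP [/eqP EB' | HB'] Hne Hz.
- by rewrite EB EB' eqxx in Hne.
- apply/negP => Hz'; move/hasP: Hdis; apply; exists z; last by rewrite -EB.
  exact: mem_flatten_block HB' _ Hz'.
- apply/negP => Hz'; move/hasP: Hdis; apply; exists z; last by rewrite -EB'.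
  exact: mem_flatten_block HB _ Hz.
- exact: IH.
Qed.

Lemma blockwise_uniq bs : blockwise bs -> uniq bs.
Proof.
move=> [+ [+ _]]; elim: bs => //= C bs IH /andP [HC Hall].
rewrite cat_uniq => /and3P [_ Hdis Hu]; rewrite IH // andbT.
apply/negP => HCin; move/hasP: Hdis; apply.
case: C HC HCin => // z C _ HCin; exists z; last exact: mem_head.
exact: mem_flatten_block HCin _ (mem_head _ _).
Qed.

Lemma blockwise_singletons s : uniq s -> blockwise [seq [:: x] | x <- s].
Proof.
move=> Hu; split; first by apply/allP => B /mapP [x _ ->].
split; first by rewrite flatten_seq1.
by move=> B B' /mapP [x _ ->] /mapP [y _ ->] _ a b; rewrite !inE => /eqP-> /eqP->.
Qed.

Lemma size_block_lt bs B : blockwise bs -> 1 < size bs -> B \in bs ->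
  size B < size (flatten bs).
Proof.
move=> Hbw Hsz HB; have Hu := blockwise_uniq Hbw; move: Hbw => [Hne [Huf _]].
have [B' HB' HBB'] : exists2 B', B' \in bs & B' != B.
  case: bs Hsz Hu {Hne Huf} HB => [|B0 [|B1 bs]] // _ /= /andP [Hn01 _] _.
  case: (eqVneq B0 B) => [E|N]; last by exists B0; rewrite ?mem_head.
  exists B1; first by rewrite !in_cons eqxx orbT.
  by rewrite -E; apply/eqP => E1; move: Hn01; rewrite E1 mem_head.
have [z Hz] : exists z, z \in B'.
  by move/allP: Hne => /(_ _ HB'); case: B' {HB' HBB'} => // z ? _; exists z; rewrite mem_head.
have HzB : z \notin B := blocks_disjoint Huf HB' HB HBB' Hz.
have HuB : uniq B := subseq_uniq (block_subseq HB) Huf.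
have := @uniq_leq_size _ (z :: B) (flatten bs); rewrite /= HzB HuB; apply=> // w.
rewrite in_cons => /orP [/eqP->|Hw]; first exact: mem_flatten_block HB' _ Hz.
exact: mem_flatten_block HB _ Hw.
Qed.

Lemma cat_take_mid_drop (T : Type) (s : seq T) i j : i <= j ->
  s = take i s ++ drop i (take j s) ++ drop j s.
Proof.
move=> Hij; rewrite catA -{1}(cat_take_drop j s); congr (_ ++ _).
by rewrite -{1}(cat_take_drop i (take j s)) take_takel.
Qed.

Lemma uniq_mid_outside (T : eqType) (u m w : seq T) x y : uniq (u ++ m ++ w) ->
  x \in m -> y \in u ++ w -> x != y.
Proof.
rewrite !cat_uniq => /and3P [_ H1 /and3P [_ H2 _]] Hx; rewrite mem_cat => /orP [Hy|Hy].
  by apply/eqP => E; move/hasP: H1; apply; exists x; rewrite ?mem_cat ?Hx // E.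
by apply/eqP => E; move/hasP: H2; apply; exists y => //; rewrite -E.
Qed.

Lemma interval_std_sides (s : seq nat) i j : uniq s -> is_interval (std s) i j ->
  forall a b c, a \in drop i (take j s) -> b \in drop i (take j s) ->
    c \in take i s ++ drop j s -> (a < c) = (b < c) /\ (c < a) = (c < b).
Proof.
move=> Hu [/andP [Hij Hj] [a0 Hp]] a b c Ha Hb Hc.
have Hsplit := cat_take_mid_drop s Hij.
have Hstd : drop i (take j (std s)) = map (rank s) (drop i (take j s)).
  by rewrite map_drop map_take.
rewrite Hstd in Hp.
have Hin d : d \in drop i (take j s) -> a0 <= rank s d < a0 + (j - i).
  by move=> Hd; rewrite -mem_iota -(perm_mem Hp); apply: map_f.
have Hmid d : d \in drop i (take j s) -> d \in s.
  by move=> Hd; rewrite Hsplit !mem_cat Hd orbT.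
have HcS : c \in s.
  by move: Hc; rewrite mem_cat => /orP [/mem_take|/mem_drop].
have Hcout : rank s c \notin iota a0 (j - i).
  rewrite -(perm_mem Hp); apply/negP => /mapP [d Hd Ed].
  have Edc : d = c by apply: (rank_inj (Hmid _ Hd) HcS); rewrite Ed.
  have Hu3 : uniq (take i s ++ drop i (take j s) ++ drop j s) by rewrite -Hsplit.
  by have := uniq_mid_outside Hu3 Hd Hc; rewrite Edc eqxx.
move: Hcout; rewrite mem_iota.
have := Hin _ Ha; have := Hin _ Hb.
rewrite !(rank_lt _ (Hmid _ Ha)) !(rank_lt _ (Hmid _ Hb)) !(rank_lt _ HcS).
by move: (rank s a) (rank s b) (rank s c) => ra rb rc; lia.
Qed.

Definition merge_blocks i j (bs : seq (seq nat)) : seq (seq nat) :=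
  take i bs ++ [:: flatten (drop i (take j bs))] ++ drop j bs.

Lemma flatten_merge_blocks i j bs : i <= j -> flatten (merge_blocks i j bs) = flatten bs.
Proof. by move=> Hij; rewrite [in RHS](cat_take_mid_drop bs Hij) !flatten_cat /= cats0. Qed.

Lemma size_merge_blocks i j bs : i <= j -> j <= size bs ->
  size (merge_blocks i j bs) = i + 1 + (size bs - j).
Proof.
move=> Hij Hj; rewrite !size_cat size_drop /= size_takel ?addnA //.
exact: leq_trans Hij Hj.
Qed.

Lemma blockwise_merge bs i j : blockwise bs -> i < j -> j <= size bs ->
  (forall a b c, a \in drop i (take j (skeleton bs)) ->
     b \in drop i (take j (skeleton bs)) ->
     c \in take i (skeleton bs) ++ drop j (skeleton bs) ->
     (a < c) = (b < c) /\ (c < a) = (c < b)) ->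
  blockwise (merge_blocks i j bs).
Proof.
move=> Hbw Hij Hj Hsides; have Hubs := blockwise_uniq Hbw; move: Hbw => [Hne [Hu Hcmp]].
rewrite /skeleton -!map_take -!map_drop -map_cat in Hsides.
have Hsplit := cat_take_mid_drop bs (ltnW Hij).
have Hubs3 : uniq (take i bs ++ drop i (take j bs) ++ drop j bs) by rewrite -Hsplit.
have Hmid B : B \in drop i (take j bs) -> B \in bs.
  by move=> HB; rewrite Hsplit !mem_cat HB orbT.
have Hout B : B \in take i bs ++ drop j bs -> B \in bs.
  by rewrite mem_cat => /orP [/mem_take|/mem_drop].
have : 0 < size (drop i (take j bs)) by rewrite size_drop size_takel ?subn_gt0.
case Emid : (drop i (take j bs)) => [|B1 rest] // _.
have HB1m : B1 \in drop i (take j bs) by rewrite Emid mem_head.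
have HB1 := Hmid _ HB1m.
have HheadM : head 0 (flatten (B1 :: rest)) = head 0 B1.
  by move/allP: Hne => /(_ _ HB1); case: B1 {Emid HB1m HB1}.
set M := flatten (B1 :: rest) in HheadM *.
rewrite /merge_blocks Emid -/M in Hsides Hubs3 Hmid HB1m *.
have Hnew B : B \in take i bs ++ [:: M] ++ drop j bs ->
    B = M \/ B \in take i bs ++ drop j bs.
  by rewrite !mem_cat in_cons in_nil orbF => /or3P [H|/eqP->|H]; [right|left|right];
    rewrite ?H ?orbT.
split.
  apply/allP => B /Hnew [->|/Hout HB]; last by move/allP: Hne; apply.
  by rewrite /M /= size_cat; move/allP: Hne => /(_ _ HB1) /leq_trans; apply; rewrite leq_addr.
split; first by rewrite /M -Emid -/(merge_blocks i j bs) flatten_merge_blocks ?(ltnW Hij).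
move=> B B' /Hnew [EB|HB] /Hnew [EB'|HB'] Hne' x y Hx Hy.
- by rewrite EB EB' eqxx in Hne'.
- rewrite EB HheadM in Hx *; have /flattenP [Bp HBp Hxp] := Hx.
  rewrite (Hcmp Bp B' (Hmid _ HBp) (Hout _ HB') (uniq_mid_outside Hubs3 HBp HB') x y Hxp Hy).
  exact: (proj1 (Hsides _ _ _ (map_f _ HBp) (map_f _ HB1m) (map_f _ HB'))).
- rewrite EB' HheadM in Hy *; have /flattenP [Bp HBp Hyp] := Hy.
  have Hne2 : B != Bp by rewrite eq_sym; apply: uniq_mid_outside Hubs3 HBp HB.
  rewrite (Hcmp B Bp (Hout _ HB) (Hmid _ HBp) Hne2 x y Hx Hyp).
  exact: (proj2 (Hsides _ _ _ (map_f _ HBp) (map_f _ HB1m) (map_f _ HB))).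
- exact: Hcmp (Hout _ HB) (Hout _ HB') Hne' x y Hx Hy.
Qed.

(* Take a
   decomposition with the fewest blocks: a nontrivial interval of its
   skeleton would allow two or more blocks to be merged. *)
Lemma simple_skeleton_decomposition s : uniq s -> 1 < size s ->
  exists bs, blockwise bs /\ flatten bs = s /\ 1 < size bs /\ simple (std (skeleton bs)).
Proof.
move=> Hu Hs.
pose decomposes bs := blockwise bs /\ flatten bs = s /\ 1 < size bs.
have Hex : exists n bs, decomposes bs /\ size bs = n.
  exists (size s), [seq [:: x] | x <- s].
  rewrite /decomposes flatten_seq1 size_map; split=> //.
  by split; [apply: blockwise_singletons|].
have [n [[bs [[Hbw [Hfl H2]] Hn]] Hmin]] := least_witness Hex.
exists bs; do 3!split=> //; move=> i j Hint.
have Husk : uniq (skeleton bs).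
  by apply: subseq_uniq (skeleton_subseq (proj1 Hbw)) _; rewrite Hfl.
have Hsides := interval_std_sides Husk Hint.
move: Hint => [/andP [Hij Hj] _]; rewrite size_std size_map in Hj *.
case: (boolP ((j - i == 0) || (j - i == 1) || (j - i == size bs))).
  by case/orP => [/orP [/eqP H|/eqP H]|/eqP H]; [left|right; left|right; right].
rewrite !negb_or => /andP [/andP [H0 H1] Hall].
have Hij' : i < j by lia.
have Hmerge : decomposes (merge_blocks i j bs).
  split; first exact: blockwise_merge.
  by rewrite flatten_merge_blocks // size_merge_blocks //; split=> //; lia.
have := Hmin _ (ex_intro _ _ (conj Hmerge erefl)).
by rewrite size_merge_blocks // -Hn; lia.
Qed.

(* A pointed sequence (v, s) stands for v :: s with a distinguished first
   entry.  [pointed_emb x y]: x embeds in y by an occurrence of x.1 :: x.2 in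
   y.1 :: y.2 that sends the point x.1 to the point y.1. *)
Definition pointed_emb (x y : nat * seq nat) : Prop :=
  exists t, subseq t y.2 /\ size t = size x.2 /\
    order_compatible (zip (y.1 :: t) (x.1 :: x.2)).

Lemma pointed_emb_trans a b c : pointed_emb a b -> pointed_emb b c -> pointed_emb a c.
Proof.
case: a b c => [v1 s1] [v2 s2] [v3 s3] [t1 [H1 [S1 M1]]] [t2 [H2 [S2 M2]]] /=.
case/subseqP: H1 => m Hm Et1.
exists (mask m t2); split; first exact: subseq_trans (mask_subseq _ _) H2.
have Sm : size (mask m t2) = size t1 by rewrite Et1 !size_mask // S2.
split; first by rewrite Sm.
apply: (@order_compatible_trans _ (v2 :: mask m s2)) => /=.
- by rewrite Sm Et1.
- by rewrite -Et1 S1.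
- have -> : (v3, v2) :: zip (mask m t2) (mask m s2) =
      mask (true :: m) (zip (v3 :: t2) (v2 :: s2)) by rewrite -zip_mask //= S2.
  exact: order_compatible_mask.
- by rewrite -Et1.
Qed.

Lemma pointed_emb_occurs v s v' s' : pointed_emb (v, s) (v', s') -> occurs (v' :: s') (v :: s).
Proof.
move=> [t [H [Hs M]]]; exists (v' :: t); split; first by rewrite /= eqxx.
by split=> //=; rewrite Hs.
Qed.

Lemma pointed_emb_subseq v B s : subseq B s -> pointed_emb (v, B) (v, s).
Proof. by move=> H; exists B; split=> //; split=> //; apply: order_compatible_refl. Qed.

Lemma pointed_emb_nil v v' s' : pointed_emb (v, [::]) (v', s').
Proof.
exists [::]; split; first exact: sub0seq.
by split=> // p q; rewrite /= !inE => /eqP-> /eqP->; rewrite !ltnn.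
Qed.

Lemma pointed_emb_single v a v' a' : v != a -> v' != a' -> (a < v) = (a' < v') ->
  pointed_emb (v, [:: a]) (v', [:: a']).
Proof.
move=> H1 H2 E; exists [:: a']; split; first by rewrite /= eqxx.
split=> // p q; rewrite /= !inE.
have flip x y : x != y -> (x < y) = ~~ (y < x).
  by move=> Hxy; rewrite ltnNge leq_eqVlt eq_sym (negbTE Hxy).
by move=> /orP [/eqP->|/eqP->] /orP [/eqP->|/eqP->] /=; rewrite ?ltnn // ?(flip _ _ H1)
  ?(flip _ _ H2) E.
Qed.

Lemma choice_seq (P : nat -> seq nat -> Prop) n :
  (forall k, k < n -> exists t, P k t) ->
  exists ts : seq (seq nat), size ts = n /\ forall k, k < n -> P k (nth [::] ts k).
Proof.
elim: n => [|n IH] H; first by exists [::].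
have [ts [Hs Hts]] := IH (fun k Hk => H k (ltnW Hk)).
have [t Ht] := H n (ltnSn n).
exists (rcons ts t); split=> [|k]; first by rewrite size_rcons Hs.
rewrite ltnS leq_eqVlt nth_rcons Hs => /orP [/eqP->|Hk]; first by rewrite ltnn eqxx.
by rewrite Hk; apply: Hts.
Qed.

Lemma subseq_flatten (ts bs : seq (seq nat)) : size ts = size bs ->
  (forall k, k < size bs -> subseq (nth [::] ts k) (nth [::] bs k)) ->
  subseq (flatten ts) (flatten bs).
Proof.
elim: ts bs => [|t ts IH] [|B bs] //= [Hs] H.
by apply: cat_subseq; [apply: (H 0) | apply: IH => // k; apply: (H k.+1)].
Qed.

Lemma size_flatten_eq (ts bs : seq (seq nat)) : size ts = size bs ->
  (forall k, k < size bs -> size (nth [::] ts k) = size (nth [::] bs k)) ->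
  size (flatten ts) = size (flatten bs).
Proof.
elim: ts bs => [|t ts IH] [|B bs] //= [Hs] H.
by rewrite !size_cat (H 0) // (IH bs) // => k; apply: (H k.+1).
Qed.

Lemma mem_zip_flatten (ts bs : seq (seq nat)) p : size ts = size bs ->
  (forall k, k < size bs -> size (nth [::] ts k) = size (nth [::] bs k)) ->
  p \in zip (flatten ts) (flatten bs) ->
  exists2 k, k < size bs & p \in zip (nth [::] ts k) (nth [::] bs k).
Proof.
elim: ts bs => [|t ts IH] [|B bs] //= [Hs] H.
rewrite zip_cat ?(H 0) // mem_cat => /orP [Hp|Hp]; first by exists 0.
by have [k Hk Hpk] := IH bs Hs (fun k Hk => H k.+1 Hk) Hp; exists k.+1.
Qed.

Lemma order_compatible_glue v v' bs bs' (ts : seq (seq nat)) :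
  blockwise bs -> blockwise bs' -> size bs = size bs' -> size ts = size bs ->
  order_compatible (zip (skeleton bs') (skeleton bs)) ->
  (forall k, k < size bs -> subseq (nth [::] ts k) (nth [::] bs' k) /\
     size (nth [::] ts k) = size (nth [::] bs k) /\
     order_compatible (zip (v' :: nth [::] ts k) (v :: nth [::] bs k))) ->
  order_compatible (zip (v' :: flatten ts) (v :: flatten bs)).
Proof.
move=> Hbw Hbw' Hsz Hts Hsk Hk.
have Hsizes k : k < size bs -> size (nth [::] ts k) = size (nth [::] bs k).
  by move=> /Hk [_ []].
have Hcase p : p \in zip (v' :: flatten ts) (v :: flatten bs) ->
    p = (v', v) \/ exists2 k, k < size bs & p \in zip (nth [::] ts k) (nth [::] bs k).
  rewrite /= in_cons => /orP [/eqP->|]; first by left.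
  by move/(mem_zip_flatten Hts Hsizes); right.
have Hin0 k : (v', v) \in zip (v' :: nth [::] ts k) (v :: nth [::] bs k) by rewrite mem_head.
have Hin1 k p : p \in zip (nth [::] ts k) (nth [::] bs k) ->
    p \in zip (v' :: nth [::] ts k) (v :: nth [::] bs k).
  by move=> Hp; rewrite /= in_cons Hp orbT.
have Hu := blockwise_uniq Hbw; have Hu' := blockwise_uniq Hbw'.
move: Hbw Hbw' => [_ [_ Hcmp]] [_ [_ Hcmp']].
move=> p q /Hcase [->|[k Hkb Hpk]] /Hcase [->|[l Hlb Hql]]; first by rewrite !ltnn.
- by have [_ [_ M]] := Hk l Hlb; apply: M (Hin0 l) (Hin1 _ _ Hql).
- by have [_ [_ M]] := Hk k Hkb; apply: M (Hin1 _ _ Hpk) (Hin0 k).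
case: (eqVneq k l) => [Ekl|Nkl].
  by rewrite -Ekl in Hql; have [_ [_ M]] := Hk k Hkb; apply: M (Hin1 _ _ Hpk) (Hin1 _ _ Hql).
have [Hp1 Hp2] := mem_zip_fst_snd Hpk; have [Hq1 Hq2] := mem_zip_fst_snd Hql.
have [[Hsk' _] [Hsl' _]] := (Hk k Hkb, Hk l Hlb).
have Hkb' : k < size bs' by rewrite -Hsz.
have Hlb' : l < size bs' by rewrite -Hsz.
rewrite (Hcmp _ _ (mem_nth _ Hkb) (mem_nth _ Hlb) _ _ _ Hp2 Hq2) ?nth_uniq //.
rewrite (Hcmp' _ _ (mem_nth _ Hkb') (mem_nth _ Hlb') _ _ _ (mem_subseq Hsk' Hp1)
  (mem_subseq Hsl' Hq1)) ?nth_uniq //.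
have Hsz2 : size (skeleton bs') = size (skeleton bs) by rewrite !size_map Hsz.
have Hk2 : k < size (skeleton bs') by rewrite size_map.
have Hl2 : l < size (skeleton bs') by rewrite size_map.
by have := Hsk _ _ (mem_zip_nth Hsz2 Hk2) (mem_zip_nth Hsz2 Hl2); rewrite /= !(nth_map [::]).
Qed.

Lemma pointed_emb_blocks v bs v' bs' : blockwise bs -> blockwise bs' ->
  size bs = size bs' -> order_compatible (zip (skeleton bs') (skeleton bs)) ->
  (forall k, k < size bs -> pointed_emb (v, nth [::] bs k) (v', nth [::] bs' k)) ->
  pointed_emb (v, flatten bs) (v', flatten bs').
Proof.
move=> Hbw Hbw' Hsz Hsk Hch; have [ts [Hts Hk]] := choice_seq Hch.
have Hsizes k : k < size bs -> size (nth [::] ts k) = size (nth [::] bs k).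
  by move=> /Hk [_ []].
exists (flatten ts); split=> /=.
  by apply: subseq_flatten => [|k]; rewrite -Hsz ?Hts // => /Hk [].
split; first exact: size_flatten_eq Hts Hsizes.
exact: order_compatible_glue Hbw Hbw' Hsz Hts Hsk Hk.
Qed.

Lemma decomposition_exists s : exists bs, uniq s -> 1 < size s ->
  blockwise bs /\ flatten bs = s /\ 1 < size bs /\ simple (std (skeleton bs)).
Proof.
case: (classic (uniq s /\ 1 < size s)) => [[Hu Hs]|H]; last by exists [::] => Hu Hs; case: H.
by have [bs Hbs] := simple_skeleton_decomposition Hu Hs; exists bs.
Qed.

Definition decomp (s : seq nat) : seq (seq nat) :=
  proj1_sig (constructive_indefinite_description _ (decomposition_exists s)).

Lemma decompP s : uniq s -> 1 < size s ->
  blockwise (decomp s) /\ flatten (decomp s) = s /\ 1 < size (decomp s) /\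
  simple (std (skeleton (decomp s))).
Proof. exact: (proj2_sig (constructive_indefinite_description _ (decomposition_exists s))). Qed.

(* Labels and pieces of a pointed sequence: long tails are labelled by their
   standardised simple skeleton and split into their blocks (each carrying
   the point); tails of length 0 or 1 are atoms, labelled by their shape
   relative to the point. *)
Definition label (x : nat * seq nat) : seq nat * nat :=
  if 1 < size x.2 then (std (skeleton (decomp x.2)), 0)
  else ([::], if x.2 is [:: a] then (if a < x.1 then 2 else 3) else 1).

Definition pieces (x : nat * seq nat) : seq (nat * seq nat) :=
  if 1 < size x.2 then [seq (x.1, B) | B <- decomp x.2] else [::].

Lemma label_long x y : label x = label y -> (1 < size x.2) = (1 < size y.2).
Proof.
have atom (u w : nat * seq nat) : ~~ (1 < size u.2) -> label u = label w -> ~~ (1 < size w.2).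
  case: u w => [v s] [v' s']; rewrite /label /= => /negbTE ->; case: ifP => //= _ [_].
  by case: s => [|a [|]] //; case: (a < v).
move=> E; case: (boolP (1 < size x.2)) => Hx; last by rewrite (negbTE (atom _ _ Hx E)).
by apply/esym; apply: contraLR Hx => Hy; apply: atom Hy (esym E).
Qed.

Lemma size_pieces x y : label x = label y -> size (pieces x) = size (pieces y).
Proof.
move=> E; have Hl := label_long E.
rewrite /pieces -Hl; case: ifP => Hx //; rewrite !size_map.
by move: E; rewrite /label -Hl Hx => /(congr1 (size \o fst)); rewrite /= !size_std !size_map.
Qed.

Section PointedTails.
Variables (C : seq nat -> Prop) (L : seq (seq nat)).
Hypothesis C_closed : forall p q, C p -> is_perm q -> contains p q -> C q.
Hypothesis simples_in_L : forall p, C p /\ simple p -> p \in L.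

Definition pointed_tail (x : nat * seq nat) : Prop :=
  uniq (x.1 :: x.2) /\ exists p, C p /\ occurs p x.2.

Definition labels : seq (seq nat * nat) :=
  [seq (q, 0) | q <- L] ++ [:: ([::], 1); ([::], 2); ([::], 3)].

(* The skeleton of a tail is a pattern of the tail, hence a simple
   permutation of C: only finitely many labels occur. *)
Lemma label_mem x : pointed_tail x -> label x \in labels.
Proof.
case: x => v s [Hu [p [Cp Hps]]]; rewrite /label /=; case: ifP => Hs; last first.
  rewrite mem_cat; case: s {Hu Hps} Hs => [|a [|b s]] //= _; last case: (a < v);
  by rewrite !inE eqxx ?orbT.
have Hus : uniq s by case/andP: Hu.
have [Hbw [Hfl _]] := decompP Hus Hs.
have Hsub : subseq (skeleton (decomp s)) s by rewrite -{2}Hfl; apply: skeleton_subseq (proj1 Hbw).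
rewrite mem_cat map_f // simples_in_L //; split; last by case: (decompP Hus Hs) => _ [_ []].
apply: (C_closed Cp); first exact/std_perm/(subseq_uniq Hsub).
apply/containsE/(occurs_trans Hps)/(occurs_trans (occurs_subseq Hsub)); exact: occurs_std.
Qed.

Lemma pieces_spec x c : pointed_tail x -> c \in pieces x ->
  pointed_tail c /\ size c.2 < size x.2 /\ pointed_emb c x.
Proof.
case: x => v s [Hu [p [Cp Hps]]]; rewrite /pieces /=; case: ifP => Hs //= /mapP [B HB ->].
have Hus : uniq s by case/andP: Hu.
have [Hbw [Hfl [H2 _]]] := decompP Hus Hs.
have Hsub : subseq B s by rewrite -Hfl; apply: block_subseq.
split; last by split; [rewrite -Hfl; apply: size_block_lt | apply: pointed_emb_subseq].
split; first by apply: subseq_uniq Hu; rewrite /= eqxx.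
by exists p; split=> //; apply: occurs_trans Hps (occurs_subseq Hsub).
Qed.

Lemma pieces_combine x y : pointed_tail x -> pointed_tail y -> label x = label y ->
  (forall i, i < size (pieces x) ->
     pointed_emb (nth (0, [::]) (pieces x) i) (nth (0, [::]) (pieces y) i)) ->
  pointed_emb x y.
Proof.
case: x y => v s [v' s'] [Hu _] [Hu' _] E Hpc.
have Hus : uniq s by case/andP: Hu.
have Hus' : uniq s' by case/andP: Hu'.
case: (boolP (1 < size s)) => Hs.
  have Hs' : 1 < size s' by rewrite -(label_long E).
  have [Hbw [Hfl _]] := decompP Hus Hs; have [Hbw' [Hfl' _]] := decompP Hus' Hs'.
  move: E Hpc; rewrite /label /pieces /= Hs Hs' => -[E] Hpc.
  rewrite -Hfl -Hfl'; have Hsz := congr1 size E; rewrite !size_std !size_map in Hsz.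
  apply: pointed_emb_blocks => //; first exact: std_eq_order_compatible.
  by move=> k Hk; have := Hpc k; rewrite size_map !(nth_map [::]) -?Hsz //; apply.
have Hs' : ~~ (1 < size s') by rewrite -(label_long E).
move: E; rewrite /label /= (negbTE Hs) (negbTE Hs') => -[]; clear Hpc Hus Hus'.
case: s Hu Hs => [|a [|? ?]] // Hu _; first by move=> _; apply: pointed_emb_nil.
case: s' Hu' Hs' => [|a' [|? ?]] //= Hu' _; first by case: (a < v).
have Hva : v != a by move: Hu; rewrite /= inE andbT.
have Hva' : v' != a' by move: Hu'; rewrite /= inE andbT.
by move=> E; apply: pointed_emb_single => //; move: E; case: (a < v); case: (a' < v').
Qed.

Lemma pointed_tails_good : good_on pointed_emb pointed_tail.
Proof.
apply: (@labelled_decomposition_good _ (0, [::]) _ _ _ (fun x => size x.2) label labels pieces).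
- exact: pointed_emb_trans.
- exact: label_mem.
- exact: pieces_spec.
- by move=> x y _ _; apply: size_pieces.
- exact: pieces_combine.
Qed.

End PointedTails.

Lemma infinite_distinct_seq (P : seq nat -> Prop) : ~ finite_set P ->
  exists bb : nat -> seq nat,
    (forall n, P (bb n) /\ bb n != [::]) /\ forall i j, i < j -> bb i != bb j.
Proof.
move=> Hinf.
have Hfresh (l : seq (seq nat)) : exists b, P b /\ b \notin l.
  apply: NNPP => H; apply: Hinf; exists l => b Hb.
  by apply: NNPP => Hb'; apply: H; exists b; split=> //; apply/negP.
pose nxt l := proj1_sig (constructive_indefinite_description _ (Hfresh ([::] :: l))).
have Hnxt l : P (nxt l) /\ nxt l \notin [::] :: l.
  exact: (proj2_sig (constructive_indefinite_description _ (Hfresh ([::] :: l)))).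
pose pre n := iter n (fun l => nxt l :: l) [::].
have Hpre i j : i < j -> nxt (pre i) \in pre j.
  elim: j => // j IH; rewrite ltnS leq_eqVlt => /orP [/eqP->|Hij]; first exact: mem_head.
  by rewrite /= in_cons IH ?orbT.
exists (fun n => nxt (pre n)); split=> [n|i j Hij].
  by have [HP] := Hnxt (pre n); rewrite in_cons negb_or => /andP [].
have [_] := Hnxt (pre j); rewrite in_cons negb_or => /andP [_].
by apply: contra => /eqP <-; apply: Hpre.
Qed.

(* Removing the first entry of a nonempty basis element leaves a pointed tail:
   its standardisation is a proper pattern, hence lies in C. *)
Lemma basis_pointed_tail (C : seq nat -> Prop) v s :
  in_basis C (v :: s) -> pointed_tail C (v, s).
Proof.
move=> [Hp [_ Hmin]]; have Hu := is_perm_uniq Hp.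
split=> //; exists (std s); split; last exact: std_occurs.
apply: Hmin; first by apply: std_perm; case/andP: Hu.
  apply/containsE/(occurs_trans (occurs_subseq (subseq_cons s v))); exact: occurs_std.
by move/(congr1 size); rewrite size_std /= => /n_Sn.
Qed.

Lemma basis_antichain (C : seq nat -> Prop) b b' :
  in_basis C b -> in_basis C b' -> contains b' b -> b = b'.
Proof.
move=> [Hp [HnC _]] [_ [_ Hmin]] Hc; apply: NNPP => Hne.
exact: HnC (Hmin _ Hp Hc Hne).
Qed.

(* An infinite basis would give infinitely many distinct basis elements whose
   pointed tails lie in C; two of them embed, contradicting the antichain
   property of the basis. *)
Theorem mainTheorem8 (C : seq nat -> Prop) :
  perm_class C ->
  finite_set (fun p => C p /\ simple p) ->
  finite_set (in_basis C).
Proof.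
move=> [_ C_closed] [L simples_in_L]; apply: NNPP => /infinite_distinct_seq [bb [Hbb Hdist]].
have Hcons n : bb n = head 0 (bb n) :: behead (bb n).
  by have [_] := Hbb n; case: (bb n).
pose x n := (head 0 (bb n), behead (bb n)).
have Hx n : pointed_tail C (x n) by apply: basis_pointed_tail; rewrite -Hcons; case: (Hbb n).
have [i [j [Hij Hemb]]] := pointed_tails_good C_closed simples_in_L Hx.
have Hc : contains (bb j) (bb i) by rewrite (Hcons i) (Hcons j); apply/containsE/pointed_emb_occurs.
have [[Hbi _] [Hbj _]] := (Hbb i, Hbb j).
by have := Hdist _ _ Hij; rewrite (basis_antichain Hbi Hbj Hc) eqxx.
Qed.
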